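(* Let $d\ge3$ and let $G$ be a $d$-map endowed with a $d$-GS arc labeling. Then for every inner face $f$ of $G$, the $f$-clockwise jumps are all non-zero and they sum to $d$.
   Context: A plane map is a connected graph (loops, multiple edges allowed) embedded in the plane without crossings, up to deformation; outer (unbounded) face, inner faces; outer vertices/edges lie on the outer face; $\deg(f)$ = number of corners of face $f$. For $d\ge3$, a $d$-map has inner faces of degree $\le d$ and outer face of degree $d$ bounded by a simple cycle, with outer vertices $v_1,\dots,v_d$ clockwise (indices mod $d$). An arc is a directed edge; $-a$ its opposite. An arc labeling assigns a label in $[d]$ to every inner arc and label $i$ to the outer arc $(v_i,v_{i+1})$ for each $i\in[d]$. Label jump from label $i$ to $i'$: the $\delta\in\{0,\dots,d-1\}$ with $i+\delta\equiv i'\pmod d$. For an inner vertex $v$, a $v$-clockwise jump is the jump from an arc with initial vertex $v$ to the next such arc in clockwise order around $v$. For an inner face $f$, consider the arcs incident to $f$ having $f$ on their right; an $f$-clockwise jump is the jump from such an arc to the next one in clockwise order around $f$. A $d$-GS arc labeling is an arc labeling such that: (AL0) for all $i$, every inner arc with initial vertex $v_i$ has label $i$; (AL1) for every inner vertex $v$, the $v$-clockwise jumps sum to $d$; (AL2) for two consecutive arcs $a,a'$ in clockwise order around an inner vertex $v$ (both with initial vertex $v$), the jump from $a$ to $a'$ is at most $d-\deg(f)$, where $f$ is the face containing the corner between $a$ and $a'$; (AL3) for opposite inner arcs $a,-a$, the jump from the label of $a$ to the label of $-a$ equals $d+1-\deg(f)$, where $f$ is the face on the right of $a$. *)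

(* Plane maps are encoded as combinatorial maps (rotation systems). *)
From mathcomp Require Import all_boot all_order all_fingroup.
Set Implicit Arguments. Unset Strict Implicit. Unset Printing Implicit Defensive.

Section PlaneMaps.
Variable D : finType.            (* the arcs (darts) of the map *)
Variables alpha sigma : {perm D}.
(* alpha a = -a, the opposite arc;
   sigma a = the next arc in clockwise order around the initial vertex of a.
   Vertices = sigma-orbits (initial vertex), edges = alpha-orbits. *)

(* phi a = the next arc, in clockwise order around the face on the right of a,
   among the arcs having that face on their right.  Faces = phi-orbits;
   the face on the right of a is the phi-orbit of a, deg(f) = its size. *)
Definition phi (a : D) : D := (sigma^-1)%g (alpha a).

Definition glink : rel D := fun x y => (y == sigma x) || (y == alpha x).

Definition num_vertices := fcard sigma D.
Definition num_faces := fcard phi D.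

(* connected map of genus 0 (Euler: V - E + F = 2, with E = #|D|/2) *)
Definition plane_map : Prop :=
  [/\ forall a, alpha (alpha a) = a,
      forall a, alpha a != a,
      forall a b, connect glink a b
    & 2 * (num_vertices + num_faces) = #|D| + 4].

Definition fdeg (a : D) : nat := fingraph.order phi a.

Variable d : nat.
Variable r : D. (* an arc having the outer face on its right *)

Definition in_outer_face (a : D) : bool := fconnect phi r a.

(* c i = the outer arc (v_i, v_{i+1}), for i : 'I_d (outer face on its left) *)
Definition outer_cw_arc (i : nat) : D := alpha (iter ((d - i) %% d) phi r).

Definition outer_arc (a : D) : bool := in_outer_face a || in_outer_face (alpha a).
Definition inner_arc (a : D) : bool := ~~ outer_arc a.
Definition inner_vertex (a : D) : bool :=
  ~~ [exists b, fconnect sigma a b && in_outer_face b].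
Definition inner_face (a : D) : bool := ~~ in_outer_face a.

(* d-map: outer face of degree d bounded by a simple cycle (its d arcs have
   pairwise distinct initial vertices), inner faces of degree <= d *)
Definition d_map : Prop :=
  [/\ 3 <= d, plane_map,
      fdeg r = d,
      forall a b, in_outer_face a -> in_outer_face b -> fconnect sigma a b -> a = b
    & forall a, inner_face a -> fdeg a <= d].

Definition jump (i i' : 'I_d) : nat := (i' + d - i) %% d.

(* labels [d] are represented by 'I_d (label k in the paper <-> k-1 here) *)
Definition d_GS_labeling (lab : D -> 'I_d) : Prop :=
  [/\ forall i : 'I_d, lab (outer_cw_arc i) = i,
      (* AL0 *)
      forall (i : 'I_d) a, inner_arc a -> fconnect sigma (outer_cw_arc i) a -> lab a = i,
      (* AL1 *)
      forall a, inner_vertex a ->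
        \sum_(b | fconnect sigma a b) jump (lab b) (lab (sigma b)) = d,
      (* AL2: the corner between a and sigma a lies in the face right of a *)
      forall a, inner_vertex a -> jump (lab a) (lab (sigma a)) <= d - fdeg a
    & (* AL3 *)
      forall a, inner_arc a -> jump (lab a) (lab (alpha a)) = d.+1 - fdeg a].

End PlaneMaps.

From Pilot Require Import Defs.
From mathcomp Require Import all_boot all_order all_fingroup zify.
Set Implicit Arguments. Unset Strict Implicit. Unset Printing Implicit Defensive.

(* For an inner arc x with face f on its right, the f-clockwise jump from x to
   phi x plus the jump at the corner between phi x and -x equals the jump from
   x to -x, which is d + 1 - deg f by (AL3); by (AL2) the corner jump is at
   most d - deg f, so the face jump is positive.  On an arc whose opposite is
   outer the face jump is 1 by (AL0).  Labels telescope around a face, so each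
   face sum is a positive multiple of d.  Summing over all arcs off the outer
   face, (AL3) pairs opposite arcs into jumps d, (AL1) gives d per inner
   vertex, and Euler's formula turns the total into d times the number of
   inner faces; hence every face sum is exactly d. *)

Section Jump.
Variable d : nat.
Implicit Types i j k : 'I_d.

Lemma jump_lt i j : jump i j < d.
Proof. exact/ltn_pmod/(leq_ltn_trans _ (ltn_ord i)). Qed.

Lemma jumpK i j : (i + jump i j) %% d = j.
Proof.
rewrite /jump modnDmr subnKC; last exact: leq_trans (ltnW (ltn_ord i)) (leq_addl _ _).
by rewrite modnDr modn_small.
Qed.

Lemma jump_unique i j n : n < d -> (i + n) %% d = j -> jump i j = n.
Proof.
move=> lt_nd ijn; apply/eqP; rewrite -(modn_small (jump_lt i j)) -(modn_small lt_nd).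
by rewrite -(eqn_modDl i) jumpK ijn.
Qed.

Lemma jumpii i : jump i i = 0.
Proof. by rewrite /jump addnC addnK modnn. Qed.

Lemma jump_eq0 i j : (jump i j == 0) = (i == j).
Proof.
apply/eqP/eqP => [ij0 | <-]; last exact: jumpii.
by apply: val_inj; rewrite /= -(jumpK i j) ij0 addn0 modn_small.
Qed.

Lemma jump_split i j k : jump k j <= jump i j -> jump i k + jump k j = jump i j.
Proof.
move=> le_kj_ij; suff -> : jump i k = jump i j - jump k j by rewrite subnK.
apply: jump_unique; first exact: leq_ltn_trans (leq_subr _ _) (jump_lt i j).
apply/eqP; rewrite -(modn_small (ltn_ord k)) -(eqn_modDr (jump k j)) -addnA subnK //.
by rewrite !jumpK.
Qed.

Lemma jump_sym i j : i != j -> jump i j + jump j i = d.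
Proof.
rewrite -jump_eq0 -lt0n => jump_gt0.
have lt_ij := jump_lt i j.
suff -> : jump j i = d - jump i j by rewrite subnKC // ltnW.
apply: jump_unique; first by rewrite ltn_subrL jump_gt0 (leq_ltn_trans (leq0n _) lt_ij).
rewrite -(jumpK i j) modnDml -addnA subnKC; last exact: ltnW.
by rewrite modnDr modn_small.
Qed.

Lemma dvdn_sum_jump (T : finType) (f : T -> T) (lab : T -> 'I_d) (P : pred T) :
  injective f -> (forall x, P (f x) = P x) ->
  d %| \sum_(x | P x) jump (lab x) (lab (f x)).
Proof.
move=> f_inj Pf; set L := \sum_(x | P x) (lab x : nat).
have sum_lab_f : \sum_(x | P x) (lab (f x) : nat) = L.
  by rewrite /L [RHS](reindex_inj f_inj); apply: eq_bigl => x; rewrite Pf.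
suff : L + \sum_(x | P x) jump (lab x) (lab (f x)) = L + 0 %[mod d].
  by move/eqP; rewrite eqn_modDl mod0n.
rewrite addn0 /L -big_split /= -modn_summ.
rewrite (eq_bigr (fun x => (lab (f x) : nat))) => [|x _]; last exact: jumpK.
by rewrite sum_lab_f.
Qed.

End Jump.

Lemma sum_nat_ge_const_eq (I : finType) (P : pred I) (F : I -> nat) c :
  (forall i, P i -> c <= F i) -> \sum_(i | P i) F i = #|P| * c ->
  forall i, P i -> F i = c.
Proof.
move=> le_cF sumF i Pi.
have [_] := leqif_sum (fun i Pi => leqif_eq (le_cF i Pi)).
by rewrite sum_nat_const sumF eqxx => /esym/forall_inP/(_ i Pi)/eqP.
Qed.

Section Orbits.
Variables (T : finType) (f : T -> T).
Hypothesis f_inj : injective f.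

Lemma sum_orbits (P : pred T) (F : T -> nat) : fclosed f P ->
  \sum_(x | P x) F x = \sum_(v | froots f v && P v) \sum_(x | fconnect f v x) F x.
Proof.
have f_sym := fconnect_sym f_inj.
move=> clP; rewrite (partition_big (froot f) [pred v | froots f v && P v]) => [|x Px].
  apply: eq_bigr => v /andP[/eqP rv Pv]; apply: eq_bigl => x.
  rewrite -{1}rv root_connect // f_sym andb_idl // => vx.
  by rewrite -[P x]/(x \in P) -(closed_connect clP vx).
by rewrite inE roots_root // -[P _]/(_ \in P) -(closed_connect clP (connect_root _ x)).
Qed.

Lemma fcard_transversal (A P : {pred T}) : fclosed f P -> {subset A <= P} ->
    (forall x, x \in P -> exists2 a, a \in A & fconnect f x a) ->
    {in A &, forall a b, fconnect f a b -> a = b} ->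
  fcard f P = #|A|.
Proof.
have f_sym := fconnect_sym f_inj.
move=> clP sAP meetA uniqA.
rewrite -(card_in_image (f := froot f)) => [|a b Aa Ab /eqP]; last first.
  by rewrite root_connect //; apply: uniqA.
apply: eq_card => v; rewrite !inE; apply/andP/imageP => [[/eqP rv Pv] | [a Aa ->]].
  have [a Aa va] := meetA v Pv.
  by exists a; rewrite // -rv; apply/(rootP f_sym).
split; first exact: roots_root.
by rewrite -(closed_connect clP (connect_root _ a)) sAP.
Qed.

End Orbits.

Section PlaneMap.
Variables (D : finType) (alpha sigma : {perm D}).
Local Notation phi := (Defs.phi alpha sigma).

Lemma sigma_phi x : sigma (phi x) = alpha x.
Proof. by rewrite /Defs.phi permKV. Qed.

Lemma phi_inj : injective phi.
Proof. by move=> x y /perm_inj /perm_inj. Qed.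

Lemma fconnect_sigma_phi x : fconnect sigma (phi x) (alpha x).
Proof. by rewrite -sigma_phi fconnect1. Qed.

Lemma fdeg_phi x : fdeg alpha sigma (phi x) = fdeg alpha sigma x.
Proof. by apply: eq_card => y; rewrite -!topredE /= -(same_fconnect1 phi_inj). Qed.

Variables (d : nat) (r : D).
Local Notation outer := (in_outer_face alpha sigma r).
Local Notation outer_cw_arc := (Defs.outer_cw_arc alpha sigma d r).
Local Notation inner_arc := (Defs.inner_arc alpha sigma r).
Local Notation inner_vertex := (Defs.inner_vertex alpha sigma r).
Local Notation inner_face := (Defs.inner_face alpha sigma r).

Lemma outer_phi x : outer (phi x) = outer x.
Proof. by rewrite /in_outer_face -(same_fconnect1_r phi_inj). Qed.

Lemma inner_arcE x : inner_arc x = ~~ outer x && ~~ outer (alpha x).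
Proof. by rewrite /Defs.inner_arc /outer_arc negb_or. Qed.

Lemma inner_face_closed : fclosed phi inner_face.
Proof. by move=> x y /eqP <-; rewrite /in_mem /= /Defs.inner_face outer_phi. Qed.

Lemma inner_face_fconnect a b : inner_face a -> fconnect phi a b -> inner_face b.
Proof.
by move=> inner_a /(closed_connect inner_face_closed); rewrite -!topredE /= => <-.
Qed.

Lemma inner_vertex_closed : fclosed sigma inner_vertex.
Proof.
move=> x y /eqP <-; rewrite /in_mem /= /Defs.inner_vertex.
by congr negb; apply: eq_existsb => o; rewrite -(same_fconnect1 (@perm_inj _ sigma)).
Qed.

Lemma inner_vertex_phi_inner_arc x : inner_vertex (phi x) -> inner_arc x.
Proof.
rewrite inner_arcE /Defs.inner_vertex => inner_v.
apply/andP; split; apply: contra inner_v => O; apply/existsP.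
  by exists (phi x); rewrite connect0 outer_phi.
by exists (alpha x); rewrite fconnect_sigma_phi.
Qed.

Section OuterFace.
Hypothesis alphaK : involutive alpha.
Hypothesis d_ge3 : 2 < d.
Hypothesis fdeg_r : fdeg alpha sigma r = d.
Hypothesis outer_simple :
  forall a b, outer a -> outer b -> fconnect sigma a b -> a = b.

Let d_gt0 : 0 < d := ltnW (ltnW d_ge3).

Lemma fconnect_sigma_phi_alpha x : fconnect sigma (phi (alpha x)) x.
Proof. by rewrite -[x in fconnect _ _ x]alphaK fconnect_sigma_phi. Qed.

Lemma card_outer : #|outer| = d.
Proof. by rewrite -fdeg_r; apply: eq_card. Qed.

Lemma outer_alpha x : outer x -> ~~ outer (alpha x).
Proof.
move=> Ox; apply/negP => Oax.
have phi_x : phi x = alpha x.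
  by apply: outer_simple; rewrite ?outer_phi ?fconnect_sigma_phi.
have phi_ax : phi (alpha x) = x.
  by apply: outer_simple; rewrite ?outer_phi ?fconnect_sigma_phi_alpha.
have cycle_x : fcycle phi [:: x; alpha x] by rewrite /= phi_x phi_ax !eqxx.
have := order_le_cycle cycle_x (mem_head x _).
have -> : fingraph.order phi x = d.
  rewrite -fdeg_r; apply: eq_card => y.
  by rewrite -!topredE /= (same_connect (fconnect_sym phi_inj) Ox).
by rewrite leqNgt d_ge3.
Qed.

Lemma iter_phi_mod m : iter m phi r = iter (m %% d) phi r.
Proof.
rewrite {1}(divn_eq m d) addnC iterD iterM [iter _ (iter d phi) r]iter_fix //.
by rewrite -{1}fdeg_r /fdeg (iter_order phi_inj).
Qed.

Lemma alpha_outer_cw_arc (i : 'I_d) k :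
  (k + i) %% d = 0 -> alpha (outer_cw_arc i) = iter k phi r.
Proof.
move=> ki0; rewrite /outer_cw_arc alphaK (iter_phi_mod k); congr iter.
apply/eqP; rewrite -(eqn_modDr i) subnK; last exact: ltnW.
by rewrite modnn ki0.
Qed.

Lemma outer_alpha_outer_cw_arc i : outer (alpha (outer_cw_arc i)).
Proof. by rewrite /outer_cw_arc alphaK /in_outer_face fconnect_iter. Qed.

Lemma outer_cw_arc_notin_outer i : ~~ outer (outer_cw_arc i).
Proof.
by rewrite -[outer_cw_arc i]alphaK outer_alpha // outer_alpha_outer_cw_arc.
Qed.

Lemma outer_cw_arcP x : outer (alpha x) -> exists i : 'I_d, x = outer_cw_arc i.
Proof.
move=> Oax; set k := findex phi r (alpha x).
have lt_kd : k < d by rewrite -fdeg_r findex_max.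
exists (Ordinal (ltn_pmod (d - k) d_gt0)); apply: (can_inj alphaK).
rewrite (@alpha_outer_cw_arc _ k) ?iter_findex //=.
by rewrite modnDmr subnKC ?modnn // ltnW.
Qed.

Lemma outer_alpha_simple x y :
  outer (alpha x) -> outer (alpha y) -> fconnect sigma x y -> x = y.
Proof.
move=> Oax Oay xy; apply: (can_inj alphaK); apply: phi_inj.
apply: outer_simple; rewrite ?outer_phi //.
apply: connect_trans (fconnect_sigma_phi_alpha x) _; apply: connect_trans xy _.
by rewrite (fconnect_sym (@perm_inj _ sigma)) fconnect_sigma_phi_alpha.
Qed.

Lemma phi_outer_cw_arc (i : 'I_d) :
  fconnect sigma (outer_cw_arc (ordS i)) (phi (outer_cw_arc i)).
Proof.
have arc_i : alpha (outer_cw_arc i) = phi (alpha (outer_cw_arc (ordS i))).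
  rewrite {2}/outer_cw_arc alphaK -iterS; apply: alpha_outer_cw_arc.
  rewrite addSnnS modnDml -modnDmr /= subnK ?modnn //.
  exact/ltnW/ltn_pmod.
rewrite (fconnect_sym (@perm_inj _ sigma)).
apply: connect_trans (fconnect_sigma_phi _) _.
by rewrite arc_i fconnect_sigma_phi_alpha.
Qed.

Lemma outer_vertexP b :
  ~~ inner_vertex b -> exists i : 'I_d, fconnect sigma (outer_cw_arc i) b.
Proof.
move/negbNE/existsP => [o /andP[bo Oo]].
have [i arc_i] : exists i : 'I_d, sigma o = outer_cw_arc i.
  by apply: outer_cw_arcP; rewrite -outer_phi /Defs.phi alphaK permK.
exists i; rewrite -arc_i (fconnect_sym (@perm_inj _ sigma)).
exact: connect_trans bo (fconnect1 _ _).
Qed.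

Lemma card_outer_alpha : #|[pred x | outer (alpha x)]| = d.
Proof.
by rewrite -card_outer -!sum1_card [RHS](reindex_inj (@perm_inj _ alpha)).
Qed.

Lemma card_arcs : #|D| = d + d + #|inner_arc|.
Proof.
rewrite -{1}card_outer -{1}card_outer_alpha -addnA -(cardC outer); congr (_ + _).
rewrite -(cardID [pred x | outer (alpha x)]); congr (_ + _); apply: eq_card => x.
  by rewrite !inE andbC; apply: andb_idr => /outer_alpha; rewrite alphaK.
by rewrite !inE -topredE /= inner_arcE andbC.
Qed.

Lemma num_faces_eq : num_faces alpha sigma = fcard phi inner_face + 1.
Proof.
rewrite /num_faces (n_compC outer) addnC; congr (_ + _).
rewrite (eq_n_comp_r (a' := fconnect phi r)) ?n_comp_connect //.
exact: fconnect_sym phi_inj.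
Qed.

Lemma num_vertices_eq : num_vertices sigma = fcard sigma inner_vertex + d.
Proof.
rewrite /num_vertices (n_compC inner_vertex) -card_outer; congr (_ + _).
apply: (@fcard_transversal _ _ (@perm_inj _ sigma) outer [predC inner_vertex]).
- exact/predC_closed/inner_vertex_closed.
- move=> x Ox; rewrite !inE /Defs.inner_vertex negbK.
  by apply/existsP; exists x; rewrite connect0.
- move=> x; rewrite !inE /Defs.inner_vertex negbK.
  by case/existsP=> o /andP[xo Oo]; exists o.
- by move=> a b Oa Ob; apply: outer_simple.
Qed.

Section Labeling.
Variable lab : D -> 'I_d.
Hypothesis lab_outer_cw_arc : forall i : 'I_d, lab (outer_cw_arc i) = i.
Hypothesis lab_outer_vertex : forall (i : 'I_d) a,
  inner_arc a -> fconnect sigma (outer_cw_arc i) a -> lab a = i.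

Lemma lab_at_outer_cw_arc (i : 'I_d) b :
  ~~ outer b -> fconnect sigma (outer_cw_arc i) b -> lab b = i.
Proof.
move=> Ob ib; have [inner_b | ] := boolP (inner_arc b).
  exact: lab_outer_vertex inner_b ib.
rewrite inner_arcE Ob /= negbK => Oab.
by rewrite -(outer_alpha_simple (outer_alpha_outer_cw_arc i) Oab ib).
Qed.

Lemma lab_outer_vertex_eq b b' :
    ~~ outer b -> ~~ outer b' -> ~~ inner_vertex b ->
  fconnect sigma b b' -> lab b = lab b'.
Proof.
move=> Ob Ob' /outer_vertexP [i ib] bb'.
by rewrite (lab_at_outer_cw_arc Ob ib) (lab_at_outer_cw_arc Ob' (connect_trans ib bb')).
Qed.

Lemma jump_phi_outer x : outer (alpha x) -> jump (lab x) (lab (phi x)) = 1.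
Proof.
move=> /outer_cw_arcP [i ->].
rewrite lab_outer_cw_arc (@lab_at_outer_cw_arc (ordS i)) ?phi_outer_cw_arc //.
  by apply: jump_unique; rewrite ?addn1 // (ltn_trans _ d_ge3).
by rewrite outer_phi outer_cw_arc_notin_outer.
Qed.

Section GSLabeling.
Hypothesis fdeg_inner : forall a, inner_face a -> fdeg alpha sigma a <= d.
Hypothesis jump_sigma_inner : forall a, inner_vertex a ->
  jump (lab a) (lab (sigma a)) <= d - fdeg alpha sigma a.
Hypothesis jump_alpha_inner : forall a, inner_arc a ->
  jump (lab a) (lab (alpha a)) = d.+1 - fdeg alpha sigma a.

Lemma jump_phi_alpha_lt x : inner_arc x ->
  jump (lab (phi x)) (lab (alpha x)) < jump (lab x) (lab (alpha x)).
Proof.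
move=> inner_x; have /andP[Ox Oax] := etrans (esym (inner_arcE x)) inner_x.
rewrite jump_alpha_inner // subSn ?fdeg_inner // ltnS.
(* The corner between phi x and sigma (phi x) = alpha x lies in the face of x. *)
have [inner_v | outer_v] := boolP (inner_vertex (phi x)).
  by rewrite -sigma_phi -(fdeg_phi x) jump_sigma_inner.
by rewrite (lab_outer_vertex_eq _ Oax outer_v (fconnect_sigma_phi x)) ?outer_phi ?jumpii.
Qed.

Lemma jump_phi_inner x : inner_arc x ->
  jump (lab x) (lab (phi x)) + jump (lab (phi x)) (lab (alpha x)) =
  jump (lab x) (lab (alpha x)).
Proof. by move/jump_phi_alpha_lt/ltnW; apply: jump_split. Qed.

Lemma jump_phi_gt0 x : ~~ outer x -> 0 < jump (lab x) (lab (phi x)).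
Proof.
move=> Ox; have [/jump_phi_outer -> // | Oax] := boolP (outer (alpha x)).
have inner_x : inner_arc x by rewrite inner_arcE Ox.
have := jump_phi_inner inner_x; have := jump_phi_alpha_lt inner_x; lia.
Qed.

Section Counting.
Hypothesis sum_jump_sigma_inner : forall a, inner_vertex a ->
  \sum_(b | fconnect sigma a b) jump (lab b) (lab (sigma b)) = d.
Hypothesis euler : 2 * (num_vertices sigma + num_faces alpha sigma) = #|D| + 4.

Lemma sum_jump_sigma :
  \sum_(x | inner_vertex x) jump (lab x) (lab (sigma x)) = fcard sigma inner_vertex * d.
Proof.
rewrite (sum_orbits (@perm_inj _ sigma) _ inner_vertex_closed) -sum_nat_const.
by apply: eq_big => [// | v /andP[_ inner_v]]; apply: sum_jump_sigma_inner.
Qed.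

Lemma sum_jump_phi_alpha :
  \sum_(x | inner_arc x) jump (lab (phi x)) (lab (alpha x)) =
  \sum_(x | inner_vertex x) jump (lab x) (lab (sigma x)).
Proof.
rewrite [RHS](reindex_inj phi_inj) (bigID (fun x => inner_vertex (phi x))) /=.
rewrite [X in _ + X]big1 ?addn0 => [| x /andP[inner_x outer_v]]; last first.
  move: inner_x; rewrite inner_arcE => /andP[Ox Oax].
  by rewrite (lab_outer_vertex_eq _ Oax outer_v (fconnect_sigma_phi x)) ?outer_phi ?jumpii.
apply: eq_big => [x | x _]; last by rewrite sigma_phi.
by apply/andP/idP => [[] // | inner_v]; rewrite inner_vertex_phi_inner_arc.
Qed.

Lemma sum_jump_alpha :
  2 * \sum_(x | inner_arc x) jump (lab x) (lab (alpha x)) = #|inner_arc| * d.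
Proof.
rewrite mul2n -addnn {2}(reindex_inj (@perm_inj _ alpha)) /=.
rewrite [X in _ + X](eq_bigl inner_arc) => [| x]; last by rewrite !inner_arcE alphaK andbC.
rewrite -big_split -sum_nat_const; apply: eq_bigr => x inner_x /=.
rewrite alphaK jump_sym // -jump_eq0 -lt0n.
exact: leq_ltn_trans (leq0n _) (jump_phi_alpha_lt inner_x).
Qed.

Lemma sum_jump_phi :
  \sum_(x | inner_face x) jump (lab x) (lab (phi x)) = fcard phi inner_face * d.
Proof.
have -> : \sum_(x | inner_face x) jump (lab x) (lab (phi x)) =
          \sum_(x | inner_arc x) jump (lab x) (lab (phi x)) + d.
  rewrite (bigID (fun x => outer (alpha x))) /= addnC; congr (_ + _).
    by apply: eq_bigl => x; rewrite inner_arcE.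
  rewrite (eq_bigr (fun _ => 1)) => [|x /andP[_ /jump_phi_outer] //].
  rewrite -card_outer_alpha -sum1_card; apply: eq_bigl => x; rewrite !inE andbC.
  by apply: andb_idr => /outer_alpha; rewrite alphaK.
have sum_inner_arcs :
    \sum_(x | inner_arc x) jump (lab x) (lab (phi x)) +
    \sum_(x | inner_arc x) jump (lab (phi x)) (lab (alpha x)) =
    \sum_(x | inner_arc x) jump (lab x) (lab (alpha x)).
  by rewrite -big_split; apply: eq_bigr => x /jump_phi_inner.
(* Euler's formula reads #|inner_arc| + 2 = 2 * (inner vertices + inner faces). *)
move: sum_inner_arcs sum_jump_alpha euler.
rewrite sum_jump_phi_alpha sum_jump_sigma num_vertices_eq num_faces_eq card_arcs.
nia.
Qed.

Lemma sum_jump_face a : inner_face a ->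
  \sum_(b | fconnect phi a b) jump (lab b) (lab (phi b)) = d.
Proof.
have phi_sym := fconnect_sym phi_inj.
pose S v := \sum_(b | fconnect phi v b) jump (lab b) (lab (phi b)).
have S_ge v : inner_face v -> d <= S v.
  move=> inner_v; apply: dvdn_leq.
    by rewrite /S (bigD1 v) ?connect0 //= ltn_addr ?jump_phi_gt0.
  by apply: dvdn_sum_jump phi_inj _ => b; rewrite -(same_fconnect1_r phi_inj).
move=> inner_a; rewrite (eq_bigl _ _ (same_connect phi_sym (connect_root _ a))).
apply: (sum_nat_ge_const_eq (P := [pred v | froots phi v && inner_face v]) (F := S)).
- by move=> v /andP[_]; apply: S_ge.
- by rewrite -(sum_orbits phi_inj _ inner_face_closed) sum_jump_phi.
- by rewrite /= roots_root // (inner_face_fconnect inner_a (connect_root _ a)).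
Qed.

End Counting.
End GSLabeling.
End Labeling.
End OuterFace.
End PlaneMap.

Theorem mainTheorem15 (d : nat) (D : finType) (alpha sigma : {perm D}) (r : D)
    (lab : D -> 'I_d) :
  d_map alpha sigma d r ->
  d_GS_labeling alpha sigma r lab ->
  forall a : D, inner_face alpha sigma r a ->
    (forall b, fconnect (phi alpha sigma) a b ->
       jump (lab b) (lab (phi alpha sigma b)) != 0) /\
    \sum_(b | fconnect (phi alpha sigma) a b)
       jump (lab b) (lab (phi alpha sigma b)) = d.
Proof.
move=> [d_ge3 [alphaK _ _ euler] fdeg_r outer_simple fdeg_inner]
  [lab_cw lab_outer AL1 AL2 AL3] a inner_a.
split=> [b ab | ].
  rewrite -lt0n (jump_phi_gt0 alphaK d_ge3 fdeg_r outer_simple lab_cw lab_outer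
                   fdeg_inner AL2 AL3) //.
  exact: inner_face_fconnect inner_a ab.
apply: (sum_jump_face alphaK d_ge3 fdeg_r outer_simple lab_cw lab_outer
         fdeg_inner AL2 AL3 AL1 euler inner_a).
Qed.
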